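(* Let $\mathcal{M}$ be a separable metric space, let $f:\mathcal{M}\to\mathcal{M}$ be a continuous bijection with continuous inverse, and let $\mathcal{X}\subseteq\mathcal{M}$ be forward invariant under $f$ and path connected. Consider $x_{k+1}=f(x_k)$ on $\mathcal{X}$, with set of $\omega$-limit sets $\mathcal{W}$ and set of $\alpha$-limit sets $\mathcal{A}$. Suppose: every trajectory in $\mathcal{X}$ is forward precompact or backward precompact in $\mathcal{X}$; $\mathcal{W}\cup\mathcal{A}$ is countable; for every $\Omega\in\mathcal{W}$ there is a trajectory forward precompact in $\mathcal{X}$ starting in $D^+_{\mathcal{X}}(\Omega)$, and for every $\Gamma\in\mathcal{A}$ a trajectory backward precompact in $\mathcal{X}$ starting in $D^-_{\mathcal{X}}(\Gamma)$. If $\mathcal{W}\cup\mathcal{A}$ has more than one element, then there do not exist a separable metric space $\mathcal{Z}$, a continuous bijection $g:\mathcal{Z}\to\mathcal{Z}$ with continuous inverse such that $z_{k+1}=g(z_k)$ and its time reversal $z_{k+1}=g^{-1}(z_k)$ both have closed basins (e.g., an invertible linear system), and a continuous one-to-one map $F:\mathcal{X}\to\mathcal{Z}$ with $F\circ f=g\circ F$ on $\mathcal{X}$.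
   Context: Forward orbit of $\xi$: $\{f^k(\xi)\mid k\in\mathbb{N}\}$; backward orbit: $\{f^{-k}(\xi)\mid k\in\mathbb{N}\}$. A set $S\subseteq\mathcal{X}$ is precompact if its closure in $\mathcal{X}$ is compact; a trajectory is forward (backward) precompact if its forward (backward) orbit is precompact. $\omega_{\mathcal{X}}(\xi)$ is the set of $x\in\mathcal{X}$ with $f^{k_j}(\xi)\to x$ for some $k_j\to\infty$; $\alpha_{\mathcal{X}}(\xi)$ likewise with $f^{-k_j}$. $\mathcal{W}=\{\omega_{\mathcal{X}}(\xi)\mid\xi\in\mathcal{X}\}$, $\mathcal{A}=\{\alpha_{\mathcal{X}}(\xi)\mid\xi\in\mathcal{X}\}$, $D^+_{\mathcal{X}}(\Omega)=\{\xi\in\mathcal{X}\mid\omega_{\mathcal{X}}(\xi)=\Omega\}$, $D^-_{\mathcal{X}}(\Gamma)=\{\xi\in\mathcal{X}\mid\alpha_{\mathcal{X}}(\xi)=\Gamma\}$. A system has closed basins if the domain of attraction of each of its $\omega$-limit sets is closed (for a time reversal: each domain of repulsion of each $\alpha$-limit set of the original system is closed). Same notions on $\mathcal{Z}$ for $g$. *)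

From HB Require Import structures.
From mathcomp Require Import all_boot all_order all_algebra.
From mathcomp Require Import all_classical all_reals all_analysis.

Set Implicit Arguments.
Unset Strict Implicit.
Unset Printing Implicit Defensive.

Import Order.TTheory GRing.Theory Num.Theory.
Import numFieldNormedType.Exports.
Local Open Scope classical_set_scope.
Local Open Scope ring_scope.

Definition separable (T : topologicalType) : Prop :=
  exists D : set T, countable D /\ closure D = setT.

Definition path_connected (R : realType) (T : topologicalType) (X : set T) : Prop :=
  forall x y, X x -> X y ->
    exists gam : R -> T,
      {within `[0, 1]%classic, continuous gam} /\ gam 0 = x /\ gam 1 = y /\
      (forall t, `[0, 1]%classic t -> X (gam t)).

Definition fwd_orbit (T : Type) (f : T -> T) (xi : T) : set T :=
  [set iter k f xi | k in [set: nat]].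
Definition bwd_orbit (T : Type) (finv : T -> T) (xi : T) : set T :=
  fwd_orbit finv xi.

(* S ⊆ X is precompact in X: its closure in X (i.e. closure S ∩ X, with the
   subspace topology) is compact. *)
Definition precompact_in (T : topologicalType) (X S : set T) : Prop :=
  S `<=` X /\ compact (closure S `&` X).

Definition nat_seq_to_oo (k : nat -> nat) : Prop :=
  forall N, exists J, forall j, (J <= j)%N -> (N <= k j)%N.

Definition limset (T : topologicalType) (X : set T) (h : T -> T) (xi : T)
  : set T :=
  [set x | X x /\ exists k : nat -> nat, nat_seq_to_oo k /\
                   (fun j => iter (k j) h xi) @ \oo --> x].

Definition omega_lim (T : topologicalType) (X : set T) (f : T -> T) xi :=
  limset X f xi.
Definition alpha_lim (T : topologicalType) (X : set T) (finv : T -> T) xi :=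
  limset X finv xi.

Definition omega_sets (T : topologicalType) (X : set T) (f : T -> T)
  : set (set T) := [set omega_lim X f xi | xi in X].
Definition alpha_sets (T : topologicalType) (X : set T) (finv : T -> T)
  : set (set T) := [set alpha_lim X finv xi | xi in X].

Definition dom_attr (T : topologicalType) (X : set T) (f : T -> T) (O : set T)
  : set T := [set xi | X xi /\ omega_lim X f xi = O].
Definition dom_rep (T : topologicalType) (X : set T) (finv : T -> T) (G : set T)
  : set T := [set xi | X xi /\ alpha_lim X finv xi = G].

(* Applied to
   g^{-1} this expresses closed basins of the time reversal (domains of
   repulsion of the alpha-limit sets of g are closed). *)
Definition closed_basins (T : topologicalType) (g : T -> T) : Prop :=
  forall O, omega_sets setT g O -> closed (dom_attr setT g O).

From HB Require Import structures.
From mathcomp Require Import all_boot all_order all_algebra.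
From mathcomp Require Import all_classical all_reals all_analysis.
From mathcomp Require Import lra.

Set Implicit Arguments.
Unset Strict Implicit.
Unset Printing Implicit Defensive.

Import Order.TTheory GRing.Theory Num.Theory.
Import numFieldNormedType.Exports.
Local Open Scope classical_set_scope.
Local Open Scope ring_scope.

(* Put Phi x := omega_g(F x).  Continuity of F and closed basins of g make the
   fibers of Phi closed in X.  Every value of Phi is the image under F of an
   omega-limit set of f: when only the backward orbit of x is precompact, Phi x
   is also the value of Phi at a point of alpha(x), whose forward orbit is
   precompact.  So Phi takes countably many values, and along a path in X it
   would cut [0, 1] into countably many disjoint closed sets, at least two of
   them nonempty, which Sierpinski's theorem forbids.  Hence Phi is constant on
   X and, F being injective, all omega-limit sets of f coincide; likewise all
   alpha-limit sets, using g^-1.  Finally the omega-limit set and the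
   alpha-limit set contain each other, as a limit set contains the limit sets,
   in the opposite time direction, of its points. *)

(** * Limit sets in metric spaces *)

Lemma iter_cancel_subn (T : Type) (h hinv : T -> T) (x : T) n k :
  cancel hinv h -> (n <= k)%N -> iter n h (iter k hinv x) = iter (k - n) hinv x.
Proof.
move=> hK; elim: n k => [|n IHn] k nk; first by rewrite subn0.
by rewrite iterS IHn 1?ltnW // -[(k - n)%N](subnSK nk) iterS hK.
Qed.

Lemma continuous_iter (T : topologicalType) (h : T -> T) :
  continuous h -> forall n, continuous (iter n h).
Proof.
move=> hC n; elim: n => [|n IHn] x /=; first exact: cvg_id.
exact: continuous_comp (IHn x) (hC _).
Qed.

Section LimitSets.
Context {R : realType} {M : metricType R}.
Implicit Types (X : set M) (h hinv : M -> M).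

Definition seq_cluster (u : nat -> M) (x : M) : Prop :=
  forall e : R, 0 < e -> forall N, exists2 n, (N <= n)%N & ball x e (u n).

Lemma limsetP X h xi x :
  limset X h xi x <-> X x /\ seq_cluster (fun k => iter k h xi) x.
Proof.
split=> [[Xx [k [k_oo cvk]]]|[Xx acc]].
  split=> // e e0 N; have [J0 _ HJ0] := cvg_ball cvk e0.
  have [J HJ] := k_oo N.
  exists (k (maxn J J0)); first exact: HJ (leq_maxl _ _).
  exact: HJ0 (leq_maxr _ _).
split=> //; have /choice[k Hk] : forall j : nat,
    exists k, (j <= k)%N /\ ball x (j.+1%:R^-1) (iter k h xi).
  move=> j; have [|k jk] := acc (j.+1%:R^-1) _ j; first by rewrite invr_gt0.
  by exists k.
exists k; split.
  by move=> N; exists N => j Nj; apply: leq_trans Nj (proj1 (Hk j)).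
apply/cvg_ballP => e e0.
have [J _ HJ] := near_infty_natSinv_lt (PosNum e0).
exists J => // j /= Jj; apply: le_ball (proj2 (Hk j)); exact: ltW (HJ j Jj).
Qed.

Lemma compact_seq_cluster (K : set M) (u : nat -> M) :
  compact K -> (forall n, K (u n)) -> exists2 x, K x & seq_cluster u x.
Proof.
move=> cK Ku; have uK : (u @ \oo) K by exists 0%N => // n _; exact: Ku.
have [x [Kx clx]] := cK _ _ uK; exists x => // e e0 N.
have uN : (u @ \oo) (u @` [set n | (N <= n)%N]).
  by exists N => // n Nn; exists n.
by have [_ [[n Nn <-] xn]] := clx _ _ uN (nbhsx_ballx x _ e0); exists n.
Qed.

Lemma precompact_in_closure X (S : set M) :
  precompact_in X S -> closure S `<=` X /\ compact (closure S).
Proof.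
move=> [SX cK].
have clK : closed (closure S `&` X).
  exact: compact_closed (@metric_hausdorff _ _) cK.
have SXE : closure S `&` X = closure S.
  apply/seteqP; split=> [s []//|]; rewrite [A in A `<=` _]closureE.
  apply: smallest_sub clK _ => s Ss.
  by split; [exact: subset_closure|exact: SX].
by rewrite -SXE; split=> // s [].
Qed.

Lemma limset_closure X h xi : limset X h xi `<=` closure (fwd_orbit h xi).
Proof.
move=> x /limsetP[_ acc] B /nbhs_ballP[e e0 Be].
have [k _ xk] := acc e e0 0%N.
by exists (iter k h xi); split; [exists k|exact: Be].
Qed.

Lemma limset_nonempty X h xi :
  precompact_in X (fwd_orbit h xi) -> limset X h xi !=set0.
Proof.
move=> /precompact_in_closure[clX cK].
have [|y cly acc] := compact_seq_cluster cK (u := fun k => iter k h xi).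
  by move=> k; apply: subset_closure; exists k.
by exists y; apply/limsetP; split; [exact: clX|].
Qed.

Lemma limset_iter X h k xi : limset X h (iter k h xi) = limset X h xi.
Proof.
apply/seteqP; split=> x /limsetP[Xx acc]; apply/limsetP; split=> // e e0 N.
  have [j Nj xj] := acc e e0 N; exists (j + k)%N; last by rewrite iterD.
  exact: leq_trans Nj (leq_addr _ _).
have [j Nj xj] := acc e e0 (N + k)%N.
have kj : (k <= j)%N by apply: leq_trans Nj; rewrite leq_addl.
exists (j - k)%N; first by rewrite leq_subRL // addnC.
by rewrite -iterD subnK.
Qed.

Lemma seq_cluster_iter_cancel h hinv xi y n :
  continuous h -> cancel hinv h ->
  seq_cluster (fun k => iter k hinv xi) y ->
  seq_cluster (fun k => iter k hinv xi) (iter n h y).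
Proof.
move=> hC hK acc e e0 N.
have := continuous_iter hC (nbhsx_ballx (iter n h y) _ e0).
rewrite nbhs_simpl => /nbhs_ballP[d d0 Hd].
have [k Nnk yk] := acc d d0 (N + n)%N.
have nk : (n <= k)%N by apply: leq_trans Nnk; rewrite leq_addl.
exists (k - n)%N; first by rewrite leq_subRL // addnC.
by rewrite -(iter_cancel_subn xi hK nk); exact: Hd.
Qed.

Lemma limset_inv_sub X h hinv xi y :
  continuous hinv -> cancel h hinv ->
  limset X h xi y -> limset X hinv y `<=` limset X h xi.
Proof.
move=> hiC hK /limsetP[_ accy] w /limsetP[Xw accw]; apply/limsetP.
split=> // e e0 N.
have e2 : 0 < e / 2 by rewrite divr_gt0.
have [m _ wm] := accw _ e2 0%N.
have [k Nk mk] := seq_cluster_iter_cancel m hiC hK accy e2 N.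
by exists k => //; rewrite (splitr e); exact: ball_triangle wm mk.
Qed.

Lemma limset_precompact_inv_orbit X h hinv xi y :
  continuous h -> cancel hinv h ->
  precompact_in X (fwd_orbit hinv xi) -> limset X hinv xi y ->
  precompact_in X (fwd_orbit h y).
Proof.
move=> hC hK pc /limsetP[_ accy].
have [clX cK] := precompact_in_closure pc.
have orb_sub : closure (fwd_orbit h y) `<=` closure (fwd_orbit hinv xi).
  rewrite [A in A `<=` _]closureE; apply: smallest_sub (@closed_closure _ _) _.
  move=> _ [n _ <-] B /nbhs_ballP[e e0 Be].
  have [k _ yk] := seq_cluster_iter_cancel n hC hK accy e0 0%N.
  by exists (iter k hinv xi); split; [exists k|exact: Be].
split; first by move=> _ [n _ <-]; apply/clX/orb_sub/subset_closure; exists n.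
have -> : closure (fwd_orbit h y) `&` X = closure (fwd_orbit h y).
  by apply/seteqP; split=> [w []//|w cw]; split=> //; exact/clX/orb_sub.
exact: subclosed_compact (@closed_closure _ _) cK orb_sub.
Qed.

Lemma omega_sets_inv_sub X h hinv S S' :
  continuous hinv -> cancel h hinv ->
  (forall T T', omega_sets X hinv T -> omega_sets X hinv T' -> T = T') ->
  (exists2 xi, dom_attr X h S xi & precompact_in X (fwd_orbit h xi)) ->
  omega_sets X hinv S' -> S' `<=` S.
Proof.
move=> hiC hK inv_eq [xi [_ <-] pc] S'inv.
have [y ly] := limset_nonempty pc.
rewrite (inv_eq S' (limset X hinv y)) //; last by exists y => //; case: ly.
exact: limset_inv_sub hiC hK ly.
Qed.

Lemma within_continuous_ball (Z : pseudoMetricType R) X (F : M -> Z) :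
  {within X, continuous F} -> forall x, X x -> forall e : R, 0 < e ->
  exists2 d : R, 0 < d & forall w, X w -> ball x d w -> ball (F x) e (F w).
Proof.
move=> /subspace_continuousP FC x Xx e e0.
have := FC x Xx (ball (F x) e) (nbhsx_ballx _ _ e0).
rewrite /= nbhs_simpl /= => /nbhs_ballP[d d0 Hd].
by exists d => // w Xw /Hd; apply.
Qed.

End LimitSets.

(** * Closed fibers and Sierpinski's theorem on [0, 1] *)

Definition closed_fibers_in (T : topologicalType) (U : Type) (A : set T)
    (phi : T -> U) : Prop :=
  forall x, A x -> closure [set y | A y /\ phi y = phi x] `&` A `<=`
                   [set y | phi y = phi x].

Lemma closed_fibers_in_comp (T1 T2 : topologicalType) (U : Type)
    (A : set T1) (B : set T2) (g : T1 -> T2) (phi : T2 -> U) :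
  {within A, continuous g} -> (forall x, A x -> B (g x)) ->
  closed_fibers_in B phi -> closed_fibers_in A (phi \o g).
Proof.
move=> /subspace_continuousP gC gAB phiB x Ax y [cly Ay].
apply: (phiB _ (gAB _ Ax)); split; last exact: gAB.
move=> V /(gC y Ay); rewrite nbhs_simpl => /cly[z [[Az phiz] Vz]].
by exists (g z); split; [split=> //; exact: gAB|exact: Vz].
Qed.

Lemma closed_basins_fibers (T : topologicalType) (g : T -> T) :
  closed_basins g -> closed_fibers_in setT (omega_lim setT g).
Proof.
move=> cb x _ y [cly _].
have /closure_id clE : closed (dom_attr setT g (omega_lim setT g x)).
  by apply: cb; exists x.
by move: cly; rewrite -[X in closure X]/(dom_attr _ _ _) -clE => -[].
Qed.

Section UnitInterval.
Variable R : realType.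

Lemma closure_inf (A : set R) : A !=set0 -> has_lbound A -> closure A (inf A).
Proof.
move=> A0 lbA B /nbhs_ballP[e e0 Be].
have [r Ar rlt] := inf_adherent e0 (conj A0 lbA).
have infr : inf A <= r by exact: ge_inf.
exists r; split=> //; apply: Be; rewrite -ball_normE /= ler0_norm; lra.
Qed.

Lemma nested_intervals_meet (a b : R ^nat) :
  nondecreasing_seq a -> nonincreasing_seq b -> (forall n, a n <= b n) ->
  exists t, forall n, a n <= t <= b n.
Proof.
move=> aup bdown ab.
have a_le_b n m : a n <= b m.
  apply: le_trans (aup _ _ (leq_maxl n m)) _.
  exact: le_trans (ab _) (bdown _ _ (leq_maxr n m)).
have hs : has_sup (range a).
  by split; [exists (a 0%N), 0%N|exists (b 0%N) => _ [n _ <-]].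
exists (sup (range a)) => n; apply/andP; split.
  by apply: (sup_upper_bound hs); exists n.
by apply: ge_sup; [exists (a 0%N), 0%N|move=> _ [m _ <-]].
Qed.

Variables (T : Type) (phi : R -> T).
Hypothesis phi_fibers : closed_fibers_in (`[0, 1]%classic : set R) phi.

Let I (t : R) := 0 <= t <= 1.

Let unit_itvE t : `[0, 1]%classic t = I t.
Proof. by rewrite /= in_itv. Qed.

Let I_between a b r : I a -> I b -> a <= r -> r <= b -> I r.
Proof. by rewrite /I => /andP[? ?] /andP[? ?] ? ?; apply/andP; split; lra. Qed.

Let phi_closure (E : set R) a r :
  I a -> I r -> E `<=` [set y | I y /\ phi y = phi a] -> closure E r ->
  phi r = phi a.
Proof.
move=> Ia Ir EI clr; apply: (phi_fibers (x := a)); first by rewrite unit_itvE.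
split; last by rewrite unit_itvE.
by apply: closureS clr => y /EI[Iy phiy]; split; rewrite ?unit_itvE.
Qed.

Lemma fiber_gap a b : I a -> I b -> a < b -> phi a <> phi b ->
  exists s t, [/\ a <= s, s < t, t <= b, phi s = phi a & phi t = phi b] /\
    (forall r, s < r -> r < t -> phi r <> phi a /\ phi r <> phi b).
Proof.
move=> Ia Ib ab pab.
pose E := [set r | a <= r <= b /\ phi r = phi a].
have hsE : has_sup E.
  by split; [exists a; split; rewrite ?lexx ?ltW|exists b => r [/andP[]]].
pose s := sup E.
have as_ : a <= s by apply: (sup_upper_bound hsE); split; rewrite ?lexx ?ltW.
have sb : s <= b by apply: ge_sup; [exact: hsE.1|move=> r [/andP[]]].
have ps : phi s = phi a.
  apply: (phi_closure Ia (I_between Ia Ib as_ sb)) (closure_sup hsE.1 hsE.2).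
  by move=> r [/andP[ar rb] pr]; split=> //; exact: I_between Ia Ib ar rb.
pose E' := [set r | s <= r <= b /\ phi r = phi b].
have hiE : has_inf E'.
  by split; [exists b; split; rewrite ?sb ?lexx|exists s => r [/andP[]]].
pose t := inf E'.
have tb : t <= b by apply: ge_inf hiE.2 _ _; split; rewrite ?sb ?lexx.
have st : s <= t by apply: lb_le_inf hiE.1 _ => r [/andP[]].
have Is := I_between Ia Ib as_ sb.
have pt : phi t = phi b.
  apply: (phi_closure Ib (I_between Is Ib st tb)) (closure_inf hiE.1 hiE.2).
  by move=> r [/andP[sr rb] pr]; split=> //; exact: I_between Is Ib sr rb.
have st' : s < t.
  rewrite lt_neqAle st andbT; apply/eqP => stE.
  by apply: pab; rewrite -ps -pt stE.
exists s, t; split=> // r sr rt; split=> pr.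
  suff : r <= s by lra.
  by apply: (sup_upper_bound hsE); split=> //; apply/andP; split; lra.
suff : t <= r by lra.
by apply: ge_inf hiE.2 _ _; split=> //; apply/andP; split; lra.
Qed.

Lemma avoid_value a b v : I a -> I b -> a < b -> phi a <> phi b ->
  exists a' b', [/\ a <= a', a' < b', b' <= b, phi a' <> phi b' &
    forall r, a' <= r -> r <= b' -> phi r <> v].
Proof.
move=> Ia Ib ab pab.
have [[c [/andP[ac cb] <-]]|nv] := pselect (exists c, a <= c <= b /\ phi c = v);
  last first.
  by exists a, b; split=> // r ar rb rv; apply: nv; exists r; rewrite ar rb.
have [ca|ca] := pselect (phi c = phi a).
  have [s [t [[as_ st tb ps pt] gap]]] := fiber_gap Ia Ib ab pab.
  have [su ut] := midf_lt st.
  exists ((s + t) / 2), t; split=> //; first exact: le_trans as_ (ltW su).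
    by rewrite pt; exact: (gap _ su ut).2.
  move=> r ur; rewrite ca le_eqVlt => /predU1P[->|rt].
    by rewrite pt => /esym.
  exact: (gap r (lt_le_trans su ur) rt).1.
have ac' : a < c.
  by rewrite lt_neqAle ac andbT; apply: contra_notN ca => /eqP <-.
have Ic := I_between Ia Ib ac cb.
have [s [t [[as_ st tc ps pt] gap]]] :=
  fiber_gap Ia Ic ac' (fun e => ca (esym e)).
have [su ut] := midf_lt st.
exists s, ((s + t) / 2); split=> //.
  exact: le_trans (ltW ut) (le_trans tc cb).
  by rewrite ps => /esym; exact: (gap _ su ut).1.
move=> r; rewrite le_eqVlt => /predU1P[<- _|sr ru].
  by rewrite ps => /esym.
exact: (gap r sr (le_lt_trans ru ut)).2.
Qed.

Lemma avoid_index (i : T -> nat) a b n :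
  {in phi @` `[0, 1]%classic &, injective i} ->
  I a -> I b -> a < b -> phi a <> phi b ->
  exists a' b', [/\ a <= a', a' < b', b' <= b, phi a' <> phi b' &
    forall r, a' <= r -> r <= b' -> i (phi r) <> n].
Proof.
move=> iinj Ia Ib ab pab.
have [[c [Ic <-]]|none] := pselect (exists c, I c /\ i (phi c) = n); last first.
  exists a, b; split=> // r ar rb rn; apply: none; exists r.
  by split=> //; exact: I_between Ia Ib ar rb.
have [a' [b' [aa' a'b' b'b pab' av]]] := avoid_value (phi c) Ia Ib ab pab.
exists a', b'; split=> // r ar rb irc; apply: (av r ar rb); apply: iinj irc.
  rewrite inE; exists r => //; rewrite unit_itvE.
  exact: I_between Ia Ib (le_trans aa' ar) (le_trans rb b'b).
by rewrite inE; exists c; rewrite ?unit_itvE.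
Qed.

Lemma sierpinski_unit_interval :
  countable (phi @` `[0, 1]%classic) -> phi 0 = phi 1.
Proof.
move=> /countable_injP[i iinj]; apply: contrapT => p01.
pose good (p : R * R) := [/\ I p.1, I p.2, p.1 < p.2 & phi p.1 <> phi p.2].
have /choice[next nextP] : forall pn : (R * R) * nat, exists q : R * R,
    good pn.1 -> [/\ good q, pn.1.1 <= q.1, q.2 <= pn.1.2 &
                     forall r, q.1 <= r -> r <= q.2 -> i (phi r) <> pn.2].
  move=> [[a b] n].
  have [[/= Ia Ib ab pab]|bad] := pselect (good (a, b)); last by exists (a, b).
  have [a' [b' [aa' a'b' b'b pab' av]]] := avoid_index n iinj Ia Ib ab pab.
  exists (a', b') => _; split=> //; split=> //=.
    exact: I_between Ia Ib aa' (le_trans (ltW a'b') b'b).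
  exact: I_between Ia Ib (le_trans aa' (ltW a'b')) b'b.
(* [nest n.+1] lies in [nest n] and misses the fiber of index [n]. *)
pose fix nest n := if n is m.+1 then next (nest m, m) else (0, 1).
have nest_good n : good (nest n).
  elim: n => [|n IHn]; last by have [] := nextP (nest n, n) IHn.
  by split; rewrite /I /= ?lexx ?ler01 ?ltr01.
have [t abt] : exists t, forall n, (nest n).1 <= t <= (nest n).2.
  apply: nested_intervals_meet => [||n].
  - apply/nondecreasing_seqP => n.
    by have [] := nextP (nest n, n) (nest_good n).
  - apply/nonincreasing_seqP => n.
    by have [] := nextP (nest n, n) (nest_good n).
  - by have [_ _ /ltW] := nest_good n.
have [_ _ _ /(_ t)] := nextP (nest (i (phi t)), i (phi t)) (nest_good _).
by have /andP[? ?] := abt (i (phi t)).+1; apply.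
Qed.

End UnitInterval.

Lemma path_connected_closed_fibers_const (R : realType) (T : topologicalType)
    (U : Type) (X : set T) (Phi : T -> U) :
  path_connected R X -> countable (Phi @` X) -> closed_fibers_in X Phi ->
  forall a b, X a -> X b -> Phi a = Phi b.
Proof.
move=> pX cPhi PhiX a b Xa Xb.
have [gam [gC [<- [<- gX]]]] := pX a b Xa Xb.
apply: (sierpinski_unit_interval (phi := Phi \o gam)).
  exact: closed_fibers_in_comp gC gX PhiX.
apply: sub_countable cPhi; apply: subset_card_le => _ [t It <-].
by exists (gam t) => //; exact: gX.
Qed.

(** * Conjugacy to a system with closed basins *)

Lemma image_inj_in (T U : Type) (X : set T) (F : T -> U) (S S' : set T) :
  (forall x y, X x -> X y -> F x = F y -> x = y) ->
  S `<=` X -> S' `<=` X -> F @` S = F @` S' -> S = S'.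
Proof.
move=> Finj.
suff sub A B : A `<=` X -> B `<=` X -> F @` A = F @` B -> A `<=` B.
  by move=> SX S'X eqS; apply/seteqP; split; apply: sub.
move=> AX BX eqAB x Ax.
have [y By Fyx] : (F @` B) (F x) by rewrite -eqAB; exists x.
by rewrite -(Finj _ _ (BX _ By) (AX _ Ax) Fyx).
Qed.

Section Conjugacy.
Context {R : realType} {M Z : metricType R} (X : set M) (F : M -> Z).
Variables (h hinv : M -> M) (hz : Z -> Z).
Hypothesis FC : {within X, continuous F}.
Hypothesis F_conj : forall x, X x -> X (h x) -> F (h x) = hz (F x).

Lemma iter_conj y : fwd_orbit h y `<=` X ->
  forall k, F (iter k h y) = iter k hz (F y).
Proof.
move=> orbX; elim=> [|k IHk] //=.
by rewrite F_conj ?IHk //; apply: orbX; [exists k|exists k.+1].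
Qed.

Lemma iter_conj_inv xi : cancel hinv h -> fwd_orbit hinv xi `<=` X ->
  forall k, iter k hz (F (iter k hinv xi)) = F xi.
Proof.
move=> hK orbX; elim=> [|k IHk] //.
by rewrite iterSr iterS -F_conj ?hK //; apply: orbX; [exists k.+1|exists k].
Qed.

Lemma limset_conj y : precompact_in X (fwd_orbit h y) ->
  limset setT hz (F y) = F @` limset X h y.
Proof.
move=> pc; have [clX cK] := precompact_in_closure pc.
have orb_cl k : closure (fwd_orbit h y) (iter k h y).
  by apply: subset_closure; exists k.
apply/seteqP; split=> [z [_ [k [k_oo cvk]]]|_ [x /limsetP[Xx accx] <-]].
  have [x clx accx] := compact_seq_cluster cK (fun j => orb_cl (k j)).
  exists x.
    apply/limsetP; split=> [|e e0 N]; first exact: clX.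
    have [J HJ] := k_oo N; have [j Jj xj] := accx e e0 J.
    by exists (k j) => //; exact: HJ.
  apply: (close_eq (@metric_hausdorff _ Z)); rewrite ball_close => e.
  have e2 : 0 < e%:num / 2 by [].
  have [d d0 Hd] := within_continuous_ball FC (clX _ clx) e2.
  have [J0 _ HJ0] := cvg_ball cvk e2.
  have [j Jj xj] := accx d d0 J0.
  have := Hd _ (clX _ (orb_cl (k j))) xj; rewrite iter_conj; last first.
    by move=> _ [n _ <-]; apply/clX/orb_cl.
  move=> Fxj; rewrite (splitr e%:num).
  exact: ball_triangle Fxj (ball_sym (HJ0 j Jj)).
apply/limsetP; split=> // e e0 N.
have [d d0 Hd] := within_continuous_ball FC Xx e0.
have [k Nk xk] := accx d d0 N; exists k => //.
rewrite -iter_conj; last by move=> _ [n _ <-]; apply/clX/orb_cl.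
by apply: Hd xk; apply/clX/orb_cl.
Qed.

Hypothesis hz_basins : closed_basins hz.

Let Phi x := omega_lim setT hz (F x).

Lemma Phi_fibers : closed_fibers_in X Phi.
Proof.
exact: closed_fibers_in_comp FC (fun _ _ => I) (closed_basins_fibers hz_basins).
Qed.

Lemma Phi_limset_inv xi y : cancel hinv h ->
  precompact_in X (fwd_orbit hinv xi) -> limset X hinv xi y -> Phi y = Phi xi.
Proof.
move=> hK [orbX _] ly; have [Xy _] := ly.
apply: (@Phi_fibers xi); first by apply: orbX; exists 0%N.
split=> //; apply: closureS (limset_closure ly) => _ [k _ <-].
split; first by apply: orbX; exists k.
by rewrite /Phi /omega_lim -[in RHS](iter_conj_inv hK orbX k) limset_iter.
Qed.

Hypotheses (h_cont : continuous h) (hK : cancel hinv h).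
Hypothesis F_inj : forall x y, X x -> X y -> F x = F y -> x = y.
Hypothesis X_path : path_connected R X.
Hypothesis orbit_precompact : forall xi, X xi ->
  precompact_in X (fwd_orbit h xi) \/ precompact_in X (fwd_orbit hinv xi).
Hypothesis omega_sets_countable : countable (omega_sets X h).
Hypothesis omega_sets_precompact : forall S, omega_sets X h S ->
  exists2 xi, dom_attr X h S xi & precompact_in X (fwd_orbit h xi).

Lemma Phi_limset xi : X xi -> exists2 S, omega_sets X h S & Phi xi = F @` S.
Proof.
move=> Xxi; have [pc|pc] := orbit_precompact Xxi.
  by exists (limset X h xi); [exists xi|exact: limset_conj pc].
have [y ly] := limset_nonempty pc; have [Xy _] := ly.
exists (limset X h y); first by exists y.
rewrite -(Phi_limset_inv hK pc ly); apply: limset_conj.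
exact: limset_precompact_inv_orbit h_cont hK pc ly.
Qed.

Lemma Phi_const a b : X a -> X b -> Phi a = Phi b.
Proof.
move=> Xa Xb.
apply: (path_connected_closed_fibers_const X_path _ Phi_fibers Xa Xb).
have : countable ((fun S => F @` S) @` omega_sets X h).
  exact: sub_countable (card_image_le _ _) omega_sets_countable.
apply: sub_countable; apply: subset_card_le => _ [xi /Phi_limset[S WS ->] <-].
by exists S.
Qed.

Lemma omega_sets_eq S S' : omega_sets X h S -> omega_sets X h S' -> S = S'.
Proof.
move=> /omega_sets_precompact[xi [Xxi <-] pc].
move=> /omega_sets_precompact[xi' [Xxi' <-] pc'].
have sub_X y : limset X h y `<=` X by move=> x [].
apply: image_inj_in F_inj (sub_X _) (sub_X _) _.
by rewrite -!limset_conj //; exact: Phi_const.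
Qed.

End Conjugacy.

Theorem corollary19 (R : realType) (M : metricType R) (f finv : M -> M)
  (X : set M) :
  separable M ->
  continuous f -> continuous finv -> cancel f finv -> cancel finv f ->
  (forall x, X x -> X (f x)) ->
  path_connected R X ->
  (forall xi, X xi ->
     precompact_in X (fwd_orbit f xi) \/ precompact_in X (bwd_orbit finv xi)) ->
  countable (omega_sets X f `|` alpha_sets X finv) ->
  (forall O, omega_sets X f O ->
     exists2 xi, dom_attr X f O xi & precompact_in X (fwd_orbit f xi)) ->
  (forall G, alpha_sets X finv G ->
     exists2 xi, dom_rep X finv G xi & precompact_in X (bwd_orbit finv xi)) ->
  (exists S1 S2, (omega_sets X f `|` alpha_sets X finv) S1 /\
                 (omega_sets X f `|` alpha_sets X finv) S2 /\ S1 <> S2) ->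
  ~ (exists (Z : metricType R) (g ginv : Z -> Z) (F : M -> Z),
       [/\ separable Z, continuous g, continuous ginv,
           cancel g ginv & cancel ginv g] /\
       closed_basins g /\ closed_basins ginv /\
       {within X, continuous F} /\
       (forall x y, X x -> X y -> F x = F y -> x = y) /\
       (forall x, X x -> F (f x) = g (F x))).
Proof.
move=> _ fC fiC ff ffi _ X_path orbit_pc WA_countable W_pc A_pc.
move=> [S1 [S2 [WA1 [WA2 S12]]]].
move=> [Z [g [ginv [F [[_ _ _ gg _] [g_basins [ginv_basins FX]]]]]]].
move: FX => [FC [F_inj F_conj]].
have F_conj_inv x : X x -> X (finv x) -> F (finv x) = ginv (F x).
  by move=> Xx Xfx; rewrite -{2}(ffi x) F_conj // gg.
have W_countable : countable (omega_sets X f).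
  exact: sub_countable (subset_card_le (@subsetUl _ _ _)) WA_countable.
have A_countable : countable (alpha_sets X finv).
  exact: sub_countable (subset_card_le (@subsetUr _ _ _)) WA_countable.
have W_eq := omega_sets_eq FC (fun x Xx _ => F_conj x Xx) g_basins fC ffi F_inj
  X_path orbit_pc W_countable W_pc.
have orbit_pc_inv xi : X xi ->
    precompact_in X (fwd_orbit finv xi) \/ precompact_in X (fwd_orbit f xi).
  by move=> /orbit_pc[]; [right|left].
have A_eq := omega_sets_eq FC F_conj_inv ginv_basins fiC ff F_inj X_path
  orbit_pc_inv A_countable A_pc.
have W_eq_A S S' : omega_sets X f S -> alpha_sets X finv S' -> S = S'.
  move=> WS AS'; apply/seteqP; split.
    by apply: omega_sets_inv_sub fC ffi W_eq (A_pc _ AS') WS.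
  by apply: omega_sets_inv_sub fiC ff A_eq (W_pc _ WS) AS'.
apply: S12; case: WA1 => [W1|A1]; case: WA2 => [W2|A2].
- exact: W_eq.
- exact: W_eq_A.
- exact/esym/W_eq_A.
- exact: A_eq.
Qed.
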